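(* Let $F,G$ be signatures on the same finite variable set $V$ such that the pair $(F,G)$ is linearly independent, but for every partial configuration $p$ of $V$ with $\mathrm{dom}(p)\ne\emptyset$ the pair $(F_p,G_p)$ is linearly dependent. Then there is a configuration $x\in\mathrm{supp}(F)$ such that $\mathrm{supp}(F)\cup\mathrm{supp}(G)=\{x,\overline{x}\}$.
   Context: A signature on a finite set $V$ is a function $F:\{0,1\}^V\to\mathbb{R}_{\ge0}$; $\mathrm{supp}(F)=\{x:F(x)\ne0\}$. A pair $(F,G)$ of signatures on $V$ is linearly dependent if there exist reals $\lambda,\mu$, not both zero, with $\lambda F=\mu G$; otherwise linearly independent. A partial configuration $p$ of $V$ is an element of $\{0,1\}^{\mathrm{dom}(p)}$, $\mathrm{dom}(p)\subseteq V$; the pinning $F_p$ is the signature on $V\setminus\mathrm{dom}(p)$ given by $F_p(x)=F(x,p)$, where $(x,p)$ is the common extension. $\overline{x}$ denotes the complement, $\overline{x}_i=1-x_i$. *)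

From HB Require Import structures.
From mathcomp Require Import all_boot all_order all_algebra.
Set Implicit Arguments. Unset Strict Implicit. Unset Printing Implicit Defensive.
Import Order.TTheory GRing.Theory Num.Theory.
Local Open Scope ring_scope.

Definition config (V : finType) := {ffun V -> bool}.

(* A signature on V with values in R (nonnegativity is a separate hypothesis). *)
Definition signature (R : Type) (V : finType) := config V -> R.

Definition nonneg_sig (R : realFieldType) (V : finType) (F : signature R V) :=
  forall x, 0 <= F x.

Definition subvars (V : finType) (D : {set V}) := {v : V | v \in D}.

Definition pconfig (V : finType) (D : {set V}) := {ffun subvars D -> bool}.

(* Common extension (x, p) of a configuration x of V \ D and p of D. *)
Definition extend (V : finType) (D : {set V}) (p : pconfig D)
  (x : config (subvars (~: D))) : config V :=
  [ffun v => match (insub v : option (subvars D)) with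
             | Some d => p d
             | None => match (insub v : option (subvars (~: D))) with
                       | Some e => x e
                       | None => false
                       end
             end].

Definition pin (R : Type) (V : finType) (D : {set V}) (F : signature R V)
  (p : pconfig D) : signature R (subvars (~: D)) :=
  fun x => F (extend p x).

Definition lin_dep (R : realFieldType) (V : finType) (F G : signature R V) :=
  exists lam mu : R, (lam != 0 \/ mu != 0) /\ (forall x, lam * F x = mu * G x).

Definition supp (R : realFieldType) (V : finType) (F : signature R V) : {set config V} :=
  [set x | F x != 0].

Definition cconj (V : finType) (x : config V) : config V := [ffun i => ~~ x i].

From HB Require Import structures.
From mathcomp Require Import all_boot all_order all_algebra.
From mathcomp Require Import ring.
Set Implicit Arguments. Unset Strict Implicit. Unset Printing Implicit Defensive.
Import Order.TTheory GRing.Theory Num.Theory.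
Local Open Scope ring_scope.

(* Encode (linear) dependence of two signatures F, G by their
   2x2 minors  m(y,w) = F y * G w - F w * G y :  F, G are dependent iff all
   minors vanish.  Pinning a single variable v to a common value shows that
   m(y,w) = 0 whenever y and w agree at some coordinate.  Since F, G are
   independent some minor m(y,z) is nonzero, so y and z disagree everywhere,
   i.e. z is the complement of y.  Any third configuration w agrees with y
   somewhere and with z somewhere, so m(y,w) = m(w,z) = 0; the Pluecker-type
   identities  G w * m(y,z) = G z * m(y,w) + G y * m(w,z)  (and the same for
   F) then force F w = G w = 0.  Finally m(y,z) != 0 puts both y and z in
   supp F u supp G, and one of them lies in supp F. *)

Section Minors.
Variables (R : comPzRingType) (V : finType) (F G : signature R V).

Definition minor (y w : config V) : R := F y * G w - F w * G y.

Lemma minorC (y w : config V) : minor w y = - minor y w.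
Proof. by rewrite /minor; ring. Qed.

Lemma minor_exchangeG (y z w : config V) :
  G w * minor y z = G z * minor y w + G y * minor w z.
Proof. by rewrite /minor; ring. Qed.

Lemma minor_exchangeF (y z w : config V) :
  F w * minor y z = F z * minor y w + F y * minor w z.
Proof. by rewrite /minor; ring. Qed.

End Minors.

Section MinorsDomain.
Variables (R : idomainType) (V : finType) (F G : signature R V).

Lemma minor_third_vanish (y z w : config V) :
  minor F G y z != 0 -> minor F G y w = 0 -> minor F G w z = 0 ->
  F w = 0 /\ G w = 0.
Proof.
move=> myz myw mwz.
have eF := minor_exchangeF F G y z w; have eG := minor_exchangeG F G y z w.
rewrite myw mwz !mulr0 addr0 in eF eG.
by split; [move/eqP: eF | move/eqP: eG]; rewrite mulf_eq0 (negPf myz) orbF => /eqP.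
Qed.

End MinorsDomain.

Section Dependence.
Variables (R : realFieldType) (V : finType).

Lemma lin_dep_minor0 (F G : signature R V) (y w : config V) :
  lin_dep F G -> minor F G y w = 0.
Proof.
move=> [lam [mu [nz dep]]].
have lam_m : lam * minor F G y w = 0.
  by rewrite /minor mulrBr !mulrA !dep; ring.
have mu_m : mu * minor F G y w = 0.
  by rewrite /minor mulrBr [F y * _]mulrC [F w * _]mulrC !mulrA -!dep; ring.
by case: nz => /negPf nz; [move: lam_m | move: mu_m];
  move/eqP; rewrite mulf_eq0 nz => /eqP.
Qed.

Lemma minors0_lin_dep (F G : signature R V) :
  (forall y w, minor F G y w = 0) -> lin_dep F G.
Proof.
move=> m0; have [/existsP [y Fy] | ] := boolP [exists y, F y != 0].
  exists (G y), (F y); split; first by right.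
  by move=> x; move/eqP: (m0 y x); rewrite subr_eq0 => /eqP ->; rewrite mulrC.
rewrite negb_exists => /forallP F0.
exists 1, 0; split; first by left; rewrite oner_eq0.
by move=> x; move/negPn/eqP: (F0 x) => ->; rewrite mul0r mulr0.
Qed.

Lemma indep_minor_neq0 (F G : signature R V) :
  ~ lin_dep F G -> exists y w, minor F G y w != 0.
Proof.
move=> indep; have [/existsP [y /existsP [w m]] | ] :=
  boolP [exists y, exists w, minor F G y w != 0]; first by exists y, w.
rewrite negb_exists => /forallP m0; case: indep; apply: minors0_lin_dep.
by move=> y w; move: (m0 y); rewrite negb_exists => /forallP /(_ w) /negPn /eqP.
Qed.

Lemma minor_neq0_supp (F G : signature R V) (y w : config V) :
  minor F G y w != 0 -> y \in supp F :|: supp G.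
Proof.
apply: contraR; rewrite !inE negb_or !negbK => /andP [/eqP Fy /eqP Gy].
by rewrite /minor Fy Gy !mul0r mulr0 subrr.
Qed.

End Dependence.

Section Configurations.
Variables (V : finType).

Lemma extend_restrict (D : {set V}) (y : config V) (b : bool) :
  {in D, forall u, y u = b} ->
  extend [ffun _ : subvars D => b] [ffun e : subvars (~: D) => y (val e)] = y.
Proof.
move=> yD; apply/ffunP => u; rewrite ffunE.
case: insubP => [d ud _ | uD]; first by rewrite ffunE yD.
case: insubP => [e _ <- | ]; first by rewrite ffunE.
by rewrite inE uD.
Qed.

(* Under local dependence, configurations agreeing at one variable have
   vanishing minor: pin that variable to their common value. *)
Lemma agree_minor0 (R : realFieldType) (F G : signature R V) (v : V)
    (y w : config V) :
  (forall (D : {set V}) (p : pconfig D), D != set0 -> lin_dep (pin F p) (pin G p)) ->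
  y v = w v -> minor F G y w = 0.
Proof.
move=> loc yw; have v_in : [set v] != set0 by apply/set0Pn; exists v; rewrite inE.
pose p : pconfig [set v] := [ffun=> y v].
have restr (x : config V) : x v = y v ->
    pin F p [ffun e => x (val e)] = F x /\ pin G p [ffun e => x (val e)] = G x.
  by move=> xv; rewrite /pin extend_restrict // => u; rewrite inE => /eqP ->.
have [Fy Gy] := restr y erefl; have [Fw Gw] := restr w (esym yw).
have := lin_dep_minor0 [ffun e => y (val e)] [ffun e => w (val e)] (loc _ p v_in).
by rewrite /minor Fy Gy Fw Gw.
Qed.

Lemma cconjK (x : config V) : cconj (cconj x) = x.
Proof. by apply/ffunP => i; rewrite !ffunE negbK. Qed.

Lemma config_neq (x y : config V) : x != y -> exists i, x i != y i.
Proof.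
move=> xy; apply/existsP; move: xy; apply: contraR.
by rewrite negb_exists => /forallP eq_xy; apply/eqP/ffunP => i; apply/eqP/negPn.
Qed.

End Configurations.

Section LocallyDependent.
Variables (R : realFieldType) (V : finType) (F G : signature R V).
Hypothesis loc : forall (D : {set V}) (p : pconfig D), D != set0 ->
  lin_dep (pin F p) (pin G p).

Lemma minor_neq0_cconj (y z : config V) : minor F G y z != 0 -> z = cconj y.
Proof.
move=> m; apply/ffunP => i; rewrite ffunE.
have [yz | ] := eqVneq (y i) (z i); first by rewrite (agree_minor0 loc yz) eqxx in m.
by case: (y i); case: (z i).
Qed.

Lemma supp_minor_neq0 (y : config V) :
  minor F G y (cconj y) != 0 -> supp F :|: supp G = [set y; cconj y].
Proof.
move=> m; apply/setP => w.
have [-> | wy] := eqVneq w y; first by rewrite set21 (minor_neq0_supp m).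
have [-> | wz] := eqVneq w (cconj y).
  by rewrite set22 (minor_neq0_supp (w := y)) // minorC oppr_eq0.
have [i wi] := config_neq wy; have [j wj] := config_neq wz.
have mwz : minor F G w (cconj y) = 0.
  apply: (agree_minor0 (v := i) loc).
  by rewrite ffunE; move: wi; case: (w i); case: (y i).
have myw : minor F G y w = 0.
  apply: (agree_minor0 (v := j) loc).
  by move: wj; rewrite ffunE; case: (w j); case: (y j).
have [Fw Gw] := minor_third_vanish m myw mwz.
by rewrite !inE (negPf wy) (negPf wz) Fw Gw eqxx.
Qed.

End LocallyDependent.

Theorem mainTheorem7 (R : realFieldType) (V : finType) (F G : signature R V) :
  nonneg_sig F -> nonneg_sig G ->
  ~ lin_dep F G ->
  (forall (D : {set V}) (p : pconfig D), D != set0 -> lin_dep (pin F p) (pin G p)) ->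
  exists x : config V, x \in supp F /\ supp F :|: supp G = [set x; cconj x].
Proof.
move=> _ _ indep loc.
have [y [z m]] := indep_minor_neq0 indep.
have z_cconj := minor_neq0_cconj loc m; rewrite z_cconj in m.
have supp_yz := supp_minor_neq0 loc m.
have [Fy | ] := boolP (y \in supp F); first by exists y.
rewrite inE negbK => /eqP Fy; exists (cconj y); rewrite cconjK [RHS]setUC; split=> //.
by apply: contraR m; rewrite inE negbK /minor Fy => /eqP ->; rewrite !mul0r subrr eqxx.
Qed.
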